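(* Let $R$ be a commutative ring, $n\ge 1$, and let $\varphi$ be an invertible alternating $2n\times 2n$ matrix with entries in $R$, regarded also as a matrix over the polynomial ring $R[X]$. Then $${\rm E}_{\varphi}(R[X],(X))={\rm E}_{\varphi}(R[X])\cap {\rm GL}_{2n-1}(R[X],(X)).$$
   Context: All rings are commutative with identity. Elements of $R^{m}$ are row vectors; ${}^t$ denotes transpose. A square matrix is alternating if it has the form $\nu-\nu^t$. For an invertible alternating $2n\times 2n$ matrix $\varphi$ over a ring $S$, write $\varphi=\begin{pmatrix}0&-c\\ c^t&\nu\end{pmatrix}$, $\varphi^{-1}=\begin{pmatrix}0&d\\ -d^t&\mu\end{pmatrix}$ with $c,d\in S^{2n-1}$, and for $v\in S^{2n-1}$ set $\alpha_\varphi(v)=I_{2n-1}+d^tv\nu$, $\beta_\varphi(v)=I_{2n-1}+\mu v^tc$. ${\rm E}_\varphi(S)$ is the subgroup of ${\rm GL}_{2n-1}(S)$ generated by all $\alpha_\varphi(v),\beta_\varphi(v)$, $v\in S^{2n-1}$. For an ideal $J$ of $S$, ${\rm E}_\varphi(J)$ is the subgroup generated by $\alpha_\varphi(v),\beta_\varphi(v)$ with $v\in J^{2n-1}$, and ${\rm E}_\varphi(S,J)$ is the normal closure of ${\rm E}_\varphi(J)$ in ${\rm E}_\varphi(S)$. Here $S=R[X]$, $J=(X)$, and ${\rm GL}_{2n-1}(R[X],(X))$ is the group of invertible matrices over $R[X]$ congruent to the identity modulo $(X)$ (i.e. equal to the identity after setting $X=0$). *)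

From HB Require Import structures.
From mathcomp Require Import all_boot all_order all_algebra.
Set Implicit Arguments. Unset Strict Implicit. Unset Printing Implicit Defensive.
Import GRing.Theory.
Local Open Scope ring_scope.

Definition mx_inverse (S : comRingType) (k : nat) (A B : 'M[S]_k) : Prop :=
  A *m B = 1%:M /\ B *m A = 1%:M.

Definition mx_invertible (S : comRingType) (k : nat) (A : 'M[S]_k) : Prop :=
  exists B, mx_inverse A B.

(* Subgroup of GL_k(S) generated by a set G of matrices (intended to be
   invertible): the smallest set containing 1 and closed under left
   multiplication by generators and by inverses of generators. *)
Inductive gen_group (S : comRingType) (k : nat) (G : 'M[S]_k -> Prop)
  : 'M[S]_k -> Prop :=
| gen_group1 : gen_group G 1%:M
| gen_groupM g A : G g -> gen_group G A -> gen_group G (g *m A)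
| gen_groupV g g' A : G g -> mx_inverse g g' -> gen_group G A ->
    gen_group G (g' *m A).

Definition alternating (S : comRingType) (m : nat) (phi : 'M[S]_m) : Prop :=
  exists nu : 'M[S]_m, phi = nu - nu^T.

Section Ephi.
(* phi is invertible with inverse psi (hypothesis mx_inverse phi psi is
   assumed wherever these definitions are used). *)
Variables (S : comRingType) (k : nat) (phi psi : 'M[S]_(1 + k)).

(* phi = [[0, -c], [c^t, nu]],  phi^-1 = psi = [[0, d], [-d^t, mu]] *)
Definition phi_c : 'rV[S]_k := - ursubmx phi.
Definition phi_nu : 'M[S]_k := drsubmx phi.
Definition phi_d : 'rV[S]_k := ursubmx psi.
Definition phi_mu : 'M[S]_k := drsubmx psi.

Definition alpha_phi (v : 'rV[S]_k) : 'M[S]_k := 1%:M + (phi_d^T *m v) *m phi_nu.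
Definition beta_phi (v : 'rV[S]_k) : 'M[S]_k := 1%:M + (phi_mu *m v^T) *m phi_c.

Definition Ephi_gens (J : S -> Prop) (M : 'M[S]_k) : Prop :=
  exists v : 'rV[S]_k, (forall j, J (v 0 j)) /\ (M = alpha_phi v \/ M = beta_phi v).

Definition Ephi_ideal (J : S -> Prop) : 'M[S]_k -> Prop := gen_group (Ephi_gens J).

Definition Ephi : 'M[S]_k -> Prop := Ephi_ideal (fun _ => True).

(* E_phi(S, J): normal closure of E_phi(J) in E_phi(S), i.e. the subgroup
   generated by all conjugates h g h^-1, h in E_phi(S), g in E_phi(J). *)
Definition Ephi_rel (J : S -> Prop) : 'M[S]_k -> Prop :=
  gen_group (fun M => exists h h' g,
     Ephi h /\ mx_inverse h h' /\ Ephi_ideal J g /\ M = h *m g *m h').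

End Ephi.

Definition idealX (R : comRingType) (p : {poly R}) : Prop :=
  exists q : {poly R}, p = 'X * q.

Definition GL_X (R : comRingType) (k : nat) (M : 'M[{poly R}]_k) : Prop :=
  mx_invertible M /\ map_mx (fun p : {poly R} => p.[0]) M = 1%:M.

(* Because phi is alternating and invertible, nu d^T = 0 and c mu = 0, so v |-> alpha_phi(v)
   and v |-> beta_phi(v) are homomorphisms from (S^(2n-1), +). The statement holds for any
   idempotent ring endomorphism sigma of S fixing phi, with J = ker sigma; for R[X] take
   sigma p = p(0). Elements of E_phi(S, J) map to 1 under sigma. Conversely, every M in
   E_phi(S) factors as M = N sigma(M) with N in E_phi(S, J): peel off one generator
   alpha(v) = alpha(v - sigma v) alpha(sigma v) at a time, using that E_phi(S, J) is normal
   in E_phi(S) and that alpha(v - sigma v) lies in E_phi(J). If sigma(M) = 1 then M = N. *)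
From HB Require Import structures.
From mathcomp Require Import all_boot all_order all_algebra.
Set Implicit Arguments. Unset Strict Implicit. Unset Printing Implicit Defensive.
Import GRing.Theory.
Local Open Scope ring_scope.

Section GenGroup.
Variables (S : comRingType) (k : nat).
Implicit Types (G H : 'M[S]_k -> Prop) (A B C g x : 'M[S]_k).

Lemma mx_inverse_uniq A B C : mx_inverse A B -> mx_inverse A C -> B = C.
Proof. by move=> [_ BA1] [AC1 _]; rewrite -[B]mulmx1 -AC1 mulmxA BA1 mul1mx. Qed.

Lemma mx_inverse_sym A B : mx_inverse A B -> mx_inverse B A.
Proof. by case. Qed.

Lemma mx_inverse1 : mx_inverse (1%:M : 'M[S]_k) 1%:M.
Proof. by split; rewrite mulmx1. Qed.

Lemma mx_inverse_mul A A' B B' :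
  mx_inverse A A' -> mx_inverse B B' -> mx_inverse (A *m B) (B' *m A').
Proof.
move=> [AA' A'A] [BB' B'B]; split.
- by rewrite mulmxA -(mulmxA A) BB' mulmx1 AA'.
- by rewrite mulmxA -(mulmxA B') A'A mulmx1 B'B.
Qed.

Lemma mx_inverse_conj x x' g g' : mx_inverse x x' -> mx_inverse g g' ->
  mx_inverse (x *m g *m x') (x *m g' *m x').
Proof.
move=> hx hg; rewrite -[x *m g' *m x']mulmxA.
exact: mx_inverse_mul (mx_inverse_mul hx hg) (mx_inverse_sym hx).
Qed.

Lemma gen_group_mul G A B : gen_group G A -> gen_group G B -> gen_group G (A *m B).
Proof.
elim=> [|g A' Gg _ IH|g g' A' Gg hg _ IH] GB; first by rewrite mul1mx.
- by rewrite -mulmxA; apply: gen_groupM (IH GB).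
- by rewrite -mulmxA; apply: gen_groupV hg (IH GB).
Qed.

Lemma gen_group_gen G g : G g -> gen_group G g.
Proof. by move=> Gg; rewrite -[g]mulmx1; apply: gen_groupM (gen_group1 _). Qed.

Lemma gen_group_genV G g g' : G g -> mx_inverse g g' -> gen_group G g'.
Proof. by move=> Gg hg; rewrite -[g']mulmx1; apply: gen_groupV hg (gen_group1 _). Qed.

Lemma gen_group_min G H :
  H 1%:M -> (forall A B, H A -> H B -> H (A *m B)) -> (forall g, G g -> H g) ->
  (forall g g', G g -> mx_inverse g g' -> H g') ->
  forall A, gen_group G A -> H A.
Proof.
move=> H1 HM GH GVH A; elim=> // [g B Gg _ HB|g g' B Gg hg _ HB]; apply: HM => //.
- exact: GH.
- exact: GVH hg.
Qed.

Lemma gen_group_mono G H : (forall g, G g -> H g) ->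
  forall A, gen_group G A -> gen_group H A.
Proof.
move=> GH; apply: gen_group_min.
- exact: gen_group1.
- exact: gen_group_mul.
- by move=> g /GH; apply: gen_group_gen.
- by move=> g g' /GH; apply: gen_group_genV.
Qed.

Section InvertibleGenerators.
Variable G : 'M[S]_k -> Prop.
Hypothesis G_inv : forall g, G g -> exists g', mx_inverse g g'.

Lemma gen_group_inverse A : gen_group G A -> exists2 A', mx_inverse A A' & gen_group G A'.
Proof.
elim=> [|g B Gg _ [B' hB GB']|g g' B Gg hg _ [B' hB GB']].
- by exists 1%:M; [apply: mx_inverse1|apply: gen_group1].
- have [g' hg] := G_inv Gg.
  exists (B' *m g'); first exact: mx_inverse_mul.
  exact: gen_group_mul GB' (gen_group_genV Gg hg).
- exists (B' *m g); first exact: mx_inverse_mul (mx_inverse_sym hg) hB.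
  exact: gen_group_mul GB' (gen_group_gen Gg).
Qed.

Lemma gen_group_invmx A A' : gen_group G A -> mx_inverse A A' -> gen_group G A'.
Proof. by move=> /gen_group_inverse[B hB GB] /(mx_inverse_uniq hB) <-. Qed.

End InvertibleGenerators.
End GenGroup.

Lemma map_mx_inverse (S T : comRingType) (f : {rmorphism S -> T}) k (A B : 'M[S]_k) :
  mx_inverse A B -> mx_inverse (map_mx f A) (map_mx f B).
Proof. by case=> AB1 BA1; split; rewrite -map_mxM ?AB1 ?BA1 map_mx1. Qed.

Section Alternating.
Variable S : comRingType.

Lemma alternating_trmx m (A : 'M[S]_m) : alternating A -> A^T = - A.
Proof. by case=> N ->; rewrite linearB /= trmxK opprB. Qed.

Lemma alternating_form m (A : 'M[S]_m) (x : 'rV[S]_m) :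
  alternating A -> x *m A *m x^T = 0.
Proof.
case=> N ->; rewrite mulmxBr mulmxBl.
have -> : x *m N^T *m x^T = (x *m N *m x^T)^T by rewrite !trmx_mul trmxK mulmxA.
by rewrite [x *m N *m x^T]mx11_scalar tr_scalar_mx subrr.
Qed.

Lemma alternating_mx11 (A : 'M[S]_1) : alternating A -> A = 0.
Proof. by move=> /(alternating_form 1%:M); rewrite mul1mx trmx1 mulmx1. Qed.

Lemma alternating_ulsubmx m1 m2 (A : 'M[S]_(m1 + m2)) :
  alternating A -> alternating (ulsubmx A).
Proof. by case=> N ->; exists (ulsubmx N); apply/matrixP => i j; rewrite !mxE. Qed.

Lemma alternating_drsubmx m1 m2 (A : 'M[S]_(m1 + m2)) :
  alternating A -> alternating (drsubmx A).
Proof. by case=> N ->; exists (drsubmx N); apply/matrixP => i j; rewrite !mxE. Qed.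

Lemma alternating_map_mx (T : comRingType) (f : {additive S -> T}) m (A : 'M[S]_m) :
  alternating A -> alternating (map_mx f A).
Proof. by case=> N ->; exists (map_mx f N); rewrite map_mxB map_trmx. Qed.

End Alternating.

Section Generators.
Variables (S : comRingType) (k : nat) (phi psi : 'M[S]_(1 + k)).
Hypotheses (phi_alt : alternating phi) (phi_psi : mx_inverse phi psi).

Local Notation c := (phi_c phi).
Local Notation nu := (phi_nu phi).
Local Notation d := (phi_d psi).
Local Notation mu := (phi_mu psi).
Local Notation alpha := (alpha_phi phi psi).
Local Notation beta := (beta_phi phi psi).

Lemma phi_ulsubmx : ulsubmx phi = 0.
Proof. exact/alternating_mx11/alternating_ulsubmx. Qed.

Lemma phi_dlsubmx : dlsubmx phi = c^T.
Proof.
have /matrixP phiT := alternating_trmx phi_alt.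
by apply/matrixP => i j; have := phiT (lshift k j) (rshift 1 i); rewrite !mxE => ->.
Qed.

Lemma phi_nu_trmx : nu^T = - nu.
Proof. exact/alternating_trmx/alternating_drsubmx. Qed.

Lemma phi_c_mu : c *m mu = 0.
Proof.
have [phi_psi1 _] := phi_psi.
rewrite -[phi]submxK -[psi]submxK mulmx_block scalar_mx_block in phi_psi1.
case/eq_block_mx: phi_psi1 => _ + _ _; rewrite phi_ulsubmx mul0mx add0r => c_mu.
by rewrite /phi_c /phi_mu mulNmx c_mu oppr0.
Qed.

Lemma phi_d_nu : d *m nu = 0.
Proof.
have [_ psi_phi1] := phi_psi.
rewrite -[phi]submxK -[psi]submxK mulmx_block scalar_mx_block in psi_phi1.
case/eq_block_mx: psi_phi1; rewrite phi_ulsubmx phi_dlsubmx mulmx0 add0r.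
move=> dc1 dnu _ _.
(* With [a] the corner of [psi]: [d nu = a c] and [c d^T = 1], so [a = a c d^T = d nu d^T = 0]. *)
have dnu_ac : d *m nu = ulsubmx psi *m c.
  by apply/eqP; rewrite /phi_c mulmxN -subr_eq0 opprK addrC dnu.
have a0 : ulsubmx psi = 0.
  have cd1 : c *m d^T = 1%:M by rewrite -[LHS]trmxK trmx_mul trmxK dc1 tr_scalar_mx.
  rewrite -[ulsubmx psi]mulmx1 -cd1 mulmxA -dnu_ac.
  exact: alternating_form (alternating_drsubmx phi_alt).
by rewrite dnu_ac a0 mul0mx.
Qed.

Lemma phi_nu_d : nu *m d^T = 0.
Proof. by rewrite -[nu]opprK -phi_nu_trmx mulNmx -trmx_mul phi_d_nu trmx0 oppr0. Qed.

Lemma alpha_phiD v w : alpha v *m alpha w = alpha (v + w).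
Proof.
rewrite /alpha_phi mulmxDl !mulmxDr !mul1mx !mulmx1 -!mulmxA (mulmxA nu) phi_nu_d.
by rewrite mul0mx !mulmx0 addr0 mulmxDl -!mulmxA addrA addrAC.
Qed.

Lemma beta_phiD v w : beta v *m beta w = beta (v + w).
Proof.
rewrite /beta_phi mulmxDl !mulmxDr !mul1mx !mulmx1 -!mulmxA (mulmxA c) phi_c_mu.
by rewrite mul0mx !mulmx0 addr0 linearD /= !(mulmxDl, mulmxDr) addrA addrAC.
Qed.

Lemma alpha_phi0 : alpha 0 = 1%:M.
Proof. by rewrite /alpha_phi mulmx0 mul0mx addr0. Qed.

Lemma beta_phi0 : beta 0 = 1%:M.
Proof. by rewrite /beta_phi trmx0 mulmx0 mul0mx addr0. Qed.

Lemma mx_inverse_alpha_phi v : mx_inverse (alpha v) (alpha (- v)).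
Proof. by split; rewrite alpha_phiD ?subrr ?addNr alpha_phi0. Qed.

Lemma mx_inverse_beta_phi v : mx_inverse (beta v) (beta (- v)).
Proof. by split; rewrite beta_phiD ?subrr ?addNr beta_phi0. Qed.

Lemma Ephi_gens_inverse (J : S -> Prop) g : (forall x, J x -> J (- x)) ->
  Ephi_gens phi psi J g -> exists2 g', mx_inverse g g' & Ephi_gens phi psi J g'.
Proof.
move=> JN [v [Jv [->|->]]]; have Jv' j : J ((- v) 0 j) by rewrite mxE; apply: JN.
- by exists (alpha (- v)); [apply: mx_inverse_alpha_phi|exists (- v); split; [|left]].
- by exists (beta (- v)); [apply: mx_inverse_beta_phi|exists (- v); split; [|right]].
Qed.

End Generators.

Section Retraction.
Variables (S : comRingType) (k : nat) (phi psi : 'M[S]_(1 + k)).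
Variables (sigma : {rmorphism S -> S}) (J : S -> Prop).
Hypotheses (phi_alt : alternating phi) (phi_psi : mx_inverse phi psi).
Hypotheses (sigma_idem : forall x, sigma (sigma x) = sigma x).
Hypotheses (sigma_phi : map_mx sigma phi = phi) (sigma_psi : map_mx sigma psi = psi).
Hypothesis J_ker : forall x, J x <-> sigma x = 0.

Implicit Types (A B g : 'M[S]_k).

Local Notation alpha := (alpha_phi phi psi).
Local Notation beta := (beta_phi phi psi).
Local Notation E := (Ephi phi psi).
Local Notation EJ := (Ephi_ideal phi psi J).
Local Notation Erel := (Ephi_rel phi psi J).
Local Notation Erel_gens := (fun N : 'M[S]_k =>
  exists h h' g, E h /\ mx_inverse h h' /\ EJ g /\ N = h *m g *m h').

Lemma map_alpha_phi v : map_mx sigma (alpha v) = alpha (map_mx sigma v).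
Proof.
rewrite /alpha_phi map_mxD map_mx1 !map_mxM -map_trmx /phi_d /phi_nu.
by rewrite map_ursubmx map_drsubmx sigma_phi sigma_psi.
Qed.

Lemma map_beta_phi v : map_mx sigma (beta v) = beta (map_mx sigma v).
Proof.
rewrite /beta_phi map_mxD map_mx1 !map_mxM -map_trmx /phi_c /phi_mu.
by rewrite map_mxN map_ursubmx map_drsubmx sigma_phi sigma_psi.
Qed.

Lemma map_mx_ker (v : 'rV[S]_k) : (forall j, J (v 0 j)) -> map_mx sigma v = 0.
Proof. by move=> Jv; apply/matrixP => i j; rewrite ord1 !mxE; apply/J_ker. Qed.

Lemma map_mx_Ephi_gens g : Ephi_gens phi psi J g -> map_mx sigma g = 1%:M.
Proof.
case=> v [/map_mx_ker sv0 [->|->]].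
- by rewrite map_alpha_phi sv0 alpha_phi0.
- by rewrite map_beta_phi sv0 beta_phi0.
Qed.

Lemma map_mx_inverse1 A B : mx_inverse A B -> map_mx sigma A = 1%:M -> map_mx sigma B = 1%:M.
Proof.
move=> /(map_mx_inverse sigma) + sA1; rewrite sA1 => hB.
exact: mx_inverse_uniq hB (mx_inverse1 _ _).
Qed.

Lemma map_mx_gen_group1 (G : 'M[S]_k -> Prop) A :
  (forall g, G g -> map_mx sigma g = 1%:M) -> gen_group G A -> map_mx sigma A = 1%:M.
Proof.
move=> G1; apply: (gen_group_min (H := fun B => map_mx sigma B = 1%:M)).
- by rewrite map_mx1.
- by move=> B C sB1 sC1; rewrite map_mxM sB1 sC1 mulmx1.
- exact: G1.
- by move=> g g' /G1 sg1 hg; apply: map_mx_inverse1 hg sg1.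
Qed.

Lemma map_mx_Ephi_ideal g : EJ g -> map_mx sigma g = 1%:M.
Proof. exact/map_mx_gen_group1/map_mx_Ephi_gens. Qed.

Lemma Ephi_inverse A : E A -> exists2 A', mx_inverse A A' & E A'.
Proof. by apply: gen_group_inverse => g /Ephi_gens_inverse[] // g' ? _; exists g'. Qed.

Lemma Ephi_invmx A A' : E A -> mx_inverse A A' -> E A'.
Proof. by apply: gen_group_invmx => g /Ephi_gens_inverse[] // g' ? _; exists g'. Qed.

Lemma Ephi_ideal_sub g : EJ g -> E g.
Proof. by apply: gen_group_mono => A [v [_ hA]]; exists v. Qed.

Lemma Ephi_rel_ideal g : EJ g -> Erel g.
Proof.
move=> EJg; apply: gen_group_gen; exists 1%:M, 1%:M, g.
by rewrite mul1mx mulmx1; split; [apply: gen_group1|split; first exact: mx_inverse1].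
Qed.

Lemma Ephi_rel_sub M : Erel M -> E M.
Proof.
have gen_sub N : Erel_gens N -> E N.
  case=> h [h' [g [Eh [hh [EJg ->]]]]].
  by apply: gen_group_mul (Ephi_invmx Eh hh); apply: gen_group_mul (Ephi_ideal_sub EJg).
apply: gen_group_min => [|A B|N|N N']; [exact: gen_group1|exact: gen_group_mul|exact: gen_sub|].
by move=> /gen_sub; apply: Ephi_invmx.
Qed.

Lemma map_mx_Ephi_rel M : Erel M -> map_mx sigma M = 1%:M.
Proof.
apply: map_mx_gen_group1 => _ [h [h' [g [_ [[hh1 _] [/map_mx_Ephi_ideal sg1 ->]]]]]].
by rewrite !map_mxM sg1 mulmx1 -map_mxM hh1 map_mx1.
Qed.

Lemma Ephi_rel_conj x x' N : E x -> mx_inverse x x' -> Erel N -> Erel (x *m N *m x').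
Proof.
move=> Ex hx; have [xx'1 x'x1] := hx.
have conjM B C : x *m (B *m C) *m x' = (x *m B *m x') *m (x *m C *m x').
  by rewrite !mulmxA -(mulmxA _ x' x) x'x1 mulmx1.
have gens_conj g : Erel_gens g -> Erel_gens (x *m g *m x').
  case=> h [h' [g0 [Eh [hh [EJg0 ->]]]]].
  exists (x *m h), (h' *m x'), g0; split; first exact: gen_group_mul.
  by split; [apply: mx_inverse_mul|split; rewrite // !mulmxA].
elim=> [|g B Gg _ EB|g g' B Gg hg _ EB]; first by rewrite mulmx1 xx'1; apply: gen_group1.
- by rewrite conjM; apply: gen_groupM EB; apply: gens_conj.
- by rewrite conjM; apply: gen_groupV (mx_inverse_conj hx hg) EB; apply: gens_conj.
Qed.

Lemma Ephi_map_mx A : E A -> E (map_mx sigma A).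
Proof.
have gens_map g : Ephi_gens phi psi (fun _ => True) g ->
    Ephi_gens phi psi (fun _ => True) (map_mx sigma g).
  case=> v [_ [->|->]]; exists (map_mx sigma v); split => //.
  - by left; apply: map_alpha_phi.
  - by right; apply: map_beta_phi.
apply: (gen_group_min (H := fun B => E (map_mx sigma B))); first by rewrite map_mx1; apply: gen_group1.
- by move=> B C EB EC; rewrite map_mxM; apply: gen_group_mul.
- by move=> g /gens_map; apply: gen_group_gen.
- by move=> g g' /gens_map Gg /(map_mx_inverse sigma); apply: gen_group_genV.
Qed.

Lemma ker_sub_map (v : 'rV[S]_k) j : J ((v - map_mx sigma v) 0 j).
Proof. by apply/J_ker; rewrite !mxE rmorphB /= sigma_idem subrr. Qed.

Lemma Ephi_gens_split g : Ephi_gens phi psi (fun _ => True) g ->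
  exists2 g0, EJ g0 & g = g0 *m map_mx sigma g.
Proof.
case=> v [_ [->|->]].
- exists (alpha (v - map_mx sigma v)).
    by apply: gen_group_gen; exists (v - map_mx sigma v); split; [apply: ker_sub_map|left].
  by rewrite map_alpha_phi alpha_phiD // subrK.
- exists (beta (v - map_mx sigma v)).
    by apply: gen_group_gen; exists (v - map_mx sigma v); split; [apply: ker_sub_map|right].
  by rewrite map_beta_phi beta_phiD // subrK.
Qed.

Lemma Ephi_factor M : E M -> exists2 N, Erel N & M = N *m map_mx sigma M.
Proof.
have step g A : Ephi_gens phi psi (fun _ => True) g ->
    (exists2 N, Erel N & A = N *m map_mx sigma A) ->
    exists2 N, Erel N & g *m A = N *m map_mx sigma (g *m A).
  move=> Gg [N EN eA]; have [g0 EJg0 eg] := Ephi_gens_split Gg.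
  have Esg := Ephi_map_mx (gen_group_gen Gg); set y := map_mx sigma g in eg Esg *.
  have [y' hy _] := Ephi_inverse Esg.
  (* [g A = g0 y N sigma(A) = (g0 (y N y^-1)) (y sigma(A))], and [y N y^-1] stays in [Erel]. *)
  exists (g0 *m (y *m N *m y')).
    exact: gen_group_mul (Ephi_rel_ideal EJg0) (Ephi_rel_conj Esg hy EN).
  by rewrite map_mxM -/y {1}eg {1}eA !mulmxA -(mulmxA _ y' y) (proj2 hy) mulmx1.
elim=> [|g A Gg _ IH|g g' A Gg hg _ IH].
- by exists 1%:M; rewrite ?map_mx1 ?mulmx1 //; apply: gen_group1.
- exact: step.
- have [g'' hg'' Gg''] := Ephi_gens_inverse phi_alt phi_psi (fun _ _ => I) Gg.
  by rewrite (mx_inverse_uniq hg hg''); apply: step.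
Qed.

Theorem Ephi_rel_char M : Erel M <-> E M /\ mx_invertible M /\ map_mx sigma M = 1%:M.
Proof.
split=> [ErM | [EM [_ sM1]]].
- have EM := Ephi_rel_sub ErM; have [M' hM _] := Ephi_inverse EM.
  by split=> //; split; [exists M'|apply: map_mx_Ephi_rel].
- by have [N EN] := Ephi_factor EM; rewrite sM1 mulmx1 => ->.
Qed.

End Retraction.

Section ConstantTerm.
Variable R : comRingType.

Local Notation const := (polyC \o horner_eval (0 : R)).

Lemma const_idem (p : {poly R}) : const (const p) = const p.
Proof. by rewrite /= !horner_evalE hornerC. Qed.

Lemma map_mx_const_polyC m n (A : 'M[R]_(m, n)) :
  map_mx const (map_mx polyC A) = map_mx polyC A.
Proof. by apply/matrixP => i j; rewrite !mxE /= horner_evalE hornerC. Qed.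

Lemma idealX_const (p : {poly R}) : idealX p <-> const p = 0.
Proof.
rewrite /= horner_evalE; split=> [[q ->]|/eqP]; first by rewrite hornerM hornerX mul0r.
by rewrite polyC_eq0 => /factor_theorem[q ->]; exists q; rewrite subr0 mulrC.
Qed.

Lemma GL_X_const k (M : 'M[{poly R}]_k) :
  GL_X M <-> mx_invertible M /\ map_mx const M = 1%:M.
Proof.
rewrite /GL_X map_mx_comp -(map_mx1 polyC).
split=> [[invM ->] //|[invM /matrixP eqM]]; split=> //.
by apply/matrixP => i j; have := eqM i j; rewrite !mxE => /polyC_inj.
Qed.

End ConstantTerm.

Theorem lemma3p8 (R : comRingType) (n : nat) (hn : (0 < n)%N)
  (phi psi : 'M[R]_(1 + (n.*2).-1))
  (halt : alternating phi) (hinv : mx_inverse phi psi) :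
  forall M : 'M[{poly R}]_((n.*2).-1),
    Ephi_rel (map_mx polyC phi) (map_mx polyC psi) (@idealX R) M <->
    (Ephi (map_mx polyC phi) (map_mx polyC psi) M /\ GL_X M).
Proof.
move=> M; have := GL_X_const M.
have := Ephi_rel_char (alternating_map_mx polyC halt) (map_mx_inverse polyC hinv)
  (@const_idem R) (map_mx_const_polyC phi) (map_mx_const_polyC psi) (@idealX_const R) M.
tauto.
Qed.
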